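(* Let $\mathcal{A}$ be a Banach algebra and $\mathcal{U}$ a Banach $\mathcal{A}$-bimodule. Suppose that there are $\mathcal{A}$-bimodule homomorphisms $\phi:\mathcal{A}\to\mathcal{U}$ and $\psi:\mathcal{U}\to\mathcal{A}$ such that $\phi\circ\psi=I_{\mathcal{U}}$, the identity mapping on $\mathcal{U}$. If every derivation on $T(\mathcal{A},\mathcal{U})$ is continuous, then every derivation on $\mathcal{A}$ is continuous.
   Context: A derivation on a Banach algebra $\mathcal{B}$ is a linear map $\delta:\mathcal{B}\to\mathcal{B}$ with $\delta(ab)=a\delta(b)+\delta(a)b$; it is not assumed continuous. An $\mathcal{A}$-bimodule homomorphism between $\mathcal{A}$-bimodules is a linear map $\phi$ with $\phi(ax)=a\phi(x)$ and $\phi(xa)=\phi(x)a$. The module extension Banach algebra $T(\mathcal{A},\mathcal{U})$ is $\mathcal{A}\oplus\mathcal{U}$ with norm $\|(a,u)\|=\|a\|+\|u\|$ and multiplication $(a,u)(b,v)=(ab,av+ub)$. *)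

From HB Require Import structures.
From mathcomp Require Import all_boot all_order all_algebra.
From mathcomp Require Import all_classical all_reals all_analysis.
Set Implicit Arguments. Unset Strict Implicit. Unset Printing Implicit Defensive.
Import Order.TTheory GRing.Theory Num.Theory.
Import numFieldNormedType.Exports.
Local Open Scope ring_scope.

Definition lin_map (K : numFieldType) (X Y : lmodType K) (f : X -> Y) : Prop :=
  forall (k : K) (x y : X), f (k *: x + y) = k *: f x + f y.

Definition bilin_map (K : numFieldType) (X Y Z : lmodType K) (m : X -> Y -> Z) : Prop :=
  (forall y : Y, lin_map (fun x : X => m x y)) /\ (forall x : X, lin_map (m x)).

Definition banach_algebra (K : numFieldType) (A : completeNormedModType K)
    (mul : A -> A -> A) : Prop :=
  [/\ bilin_map mul,
      (forall a b c : A, mul a (mul b c) = mul (mul a b) c) &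
      (forall a b : A, `|mul a b| <= `|a| * `|b|)].

Definition banach_bimodule (K : numFieldType) (A : completeNormedModType K)
    (mul : A -> A -> A) (U : completeNormedModType K)
    (l : A -> U -> U) (r : U -> A -> U) : Prop :=
  [/\ bilin_map l, bilin_map r,
      [/\ (forall (a b : A) (u : U), l (mul a b) u = l a (l b u)),
          (forall (u : U) (a b : A), r u (mul a b) = r (r u a) b) &
          (forall (a : A) (u : U) (b : A), r (l a u) b = l a (r u b))] &
      (forall (a : A) (u : U), `|l a u| <= `|a| * `|u|) /\
      (forall (u : U) (a : A), `|r u a| <= `|u| * `|a|)].

Definition bimod_hom (K : numFieldType) (A : lmodType K) (X Y : lmodType K)
    (lX : A -> X -> X) (rX : X -> A -> X) (lY : A -> Y -> Y) (rY : Y -> A -> Y)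
    (f : X -> Y) : Prop :=
  [/\ lin_map f,
      (forall (a : A) (x : X), f (lX a x) = lY a (f x)) &
      (forall (x : X) (a : A), f (rX x a) = rY (f x) a)].

Definition derivation (K : numFieldType) (X : lmodType K) (mul : X -> X -> X)
    (d : X -> X) : Prop :=
  lin_map d /\ forall a b : X, d (mul a b) = mul a (d b) + mul (d a) b.

(* Module extension algebra T(A,U) = A (+) U :
   (a,u)(b,v) = (ab, av + ub), norm ||(a,u)|| = ||a|| + ||u||. *)
Definition Tmul (K : numFieldType) (A U : completeNormedModType K)
    (mul : A -> A -> A) (l : A -> U -> U) (r : U -> A -> U)
    (x y : A * U) : A * U :=
  (mul x.1 y.1, l x.1 y.2 + r x.2 y.1).

Definition Tnorm (K : numFieldType) (A U : completeNormedModType K)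
    (x : A * U) : K := `|x.1| + `|x.2|.

Definition T_continuous (K : numFieldType) (A U : completeNormedModType K)
    (D : A * U -> A * U) : Prop :=
  forall (x : A * U) (e : K), 0 < e -> exists2 dl : K, 0 < dl &
    forall y : A * U, Tnorm (y - x) < dl -> Tnorm (D y - D x) < e.

From HB Require Import structures.
From mathcomp Require Import all_boot all_order all_algebra.
From mathcomp Require Import all_classical all_reals all_analysis.
Set Implicit Arguments. Unset Strict Implicit. Unset Printing Implicit Defensive.

Import Order.TTheory GRing.Theory Num.Theory.
Import numFieldNormedType.Exports.
Local Open Scope ring_scope.

(* A derivation d of A lifts to the derivation (a, u) |-> (d a, phi (d (psi u)))
   of T(A,U): psi carries the module products into A, d acts there by the Leibniz
   rule, and phi carries the result back, with phi o psi = id restoring the terms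
   (d a) v and u (d b).  The A-component of the lift on (a, 0) is d a, so
   continuity of the lift in the norm of T(A,U) forces continuity of d. *)

Lemma lin_mapD (K : numFieldType) (X Y : lmodType K) (f : X -> Y) :
  lin_map f -> forall x y, f (x + y) = f x + f y.
Proof. by move=> f_lin x y; rewrite -[x in LHS]scale1r f_lin scale1r. Qed.

Section ExtensionDerivation.

Variables (K : numFieldType) (A U : completeNormedModType K).
Variables (mul : A -> A -> A) (l : A -> U -> U) (r : U -> A -> U).
Variables (phi : A -> U) (psi : U -> A).
Hypothesis phi_hom : bimod_hom mul mul l r phi.
Hypothesis psi_hom : bimod_hom l r mul mul psi.
Hypothesis phiK : forall u : U, phi (psi u) = u.

Definition ext_derivation (d : A -> A) (x : A * U) : A * U :=
  (d x.1, phi (d (psi x.2))).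

Lemma ext_derivation_is_derivation (d : A -> A) :
  derivation mul d -> derivation (Tmul mul l r) (ext_derivation d).
Proof.
case: phi_hom psi_hom => [phi_lin phi_l phi_r] [psi_lin psi_l psi_r].
move=> [d_lin d_mul]; split=> [k [a u] [b v] | [a u] [b v]].
  by rewrite /ext_derivation /= d_lin psi_lin d_lin phi_lin.
rewrite /ext_derivation /Tmul /=; congr (_, _); first exact: d_mul.
rewrite (lin_mapD psi_lin) psi_l psi_r (lin_mapD d_lin) !d_mul.
rewrite !(lin_mapD phi_lin) phi_l phi_l phi_r phi_r !phiK.
by rewrite addrACA.
Qed.

End ExtensionDerivation.

Lemma continuous_of_T_continuous (K : numFieldType) (A U : completeNormedModType K)
    (D : A * U -> A * U) (d : A -> A) :
  T_continuous D -> (forall a : A, (D (a, 0)).1 = d a) -> continuous d.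
Proof.
move=> D_cont D_fst a; apply/cvgrPdist_lt => e e_gt0.
have [dl dl_gt0 D_near] := D_cont (a, 0) e e_gt0.
apply/nbhs_ballP; exists dl => // b; rewrite -ball_normE /= => ab.
have := D_near (b, 0); rewrite /Tnorm /= subrr normr0 addr0 distrC !D_fst.
move=> /(_ ab); rewrite distrC; apply: le_lt_trans.
by rewrite lerDl normr_ge0.
Qed.

Theorem proposition2p3 (K : numFieldType)
  (A : completeNormedModType K) (mul : A -> A -> A)
  (U : completeNormedModType K) (l : A -> U -> U) (r : U -> A -> U)
  (phi : A -> U) (psi : U -> A) :
  banach_algebra mul ->
  banach_bimodule mul l r ->
  bimod_hom mul mul l r phi ->
  bimod_hom l r mul mul psi ->
  (forall u : U, phi (psi u) = u) ->
  (forall D : A * U -> A * U,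
      derivation (Tmul mul l r) D -> T_continuous D) ->
  forall d : A -> A, derivation mul d -> continuous d.
Proof.
move=> _ _ phi_hom psi_hom phiK T_der_cont d d_der.
apply: (continuous_of_T_continuous (D := ext_derivation phi psi d)) => //.
exact/T_der_cont/ext_derivation_is_derivation.
Qed.
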